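(* Assume $d,s,c,v,p,\Delta\geq0$, $u^{\mathrm{REC}}>0$, $u^{\mathrm{CP}}>0$, $\gamma\in[0,1)$, and every facility cost function $f^{\mathrm{REC}}_{z,j},f^{\mathrm{CP}}_{z,k}:[0,\infty)\to\mathbb{R}$ is concave and monotonically increasing with value $0$ at $0$. Then problems (P) and (PMI) described in the context have the same optimal objective value.
   Context: Index sets (finite): chemistries $\mathcal{I}$; recycling processes $\mathcal{J}$; materials $\mathcal{K}\supseteq\mathcal{K}^{\mathrm{CP}}$ (cathode powders); zones $\mathcal{Z}$; periods $\mathcal{T}=\{1,\dots,T\}$; planning periods $\mathcal{L}=\{1,\dots,L\}$ with $\{\mathcal{T}_l\}$ a partition of $\mathcal{T}$ and $l_t$ the planning period containing $t$; $\sigma_t$ the stage of $t\in\mathcal{T}\cup\{0\}$; finite nonempty node sets $\Omega_\sigma$ with probabilities $p_\omega$; ancestor maps $a_\omega(t)\in\Omega_{\sigma_t}$ with $a_\omega(t)=\omega$ if $\omega\in\Omega_{\sigma_t}$; positive integers $N^{\mathrm{REC}}_l,N^{\mathrm{CP}}_{l,k}$, $\mathcal{N}^{\mathrm{REC}}_l=\{1,\dots,N^{\mathrm{REC}}_l\}$, $\mathcal{N}^{\mathrm{CP}}_{l,k}=\{1,\dots,N^{\mathrm{CP}}_{l,k}\}$. Data: $\Delta^{\mathrm{NB}},\Delta^{\mathrm{CP}},\Delta^{\mathrm{MC}},\Delta^{\mathrm{REC}}$, $d_{\omega,z,t,i}$, $s_{\omega,z,t,i}$, $u^{\mathrm{REC}},u^{\mathrm{CP}}$,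 costs $c^{\mathrm{NB,NM}}_{\omega,t,k},c^{\mathrm{CP,NM}}_{\omega,t,k},c^{\mathrm{MC}}_{\omega,z,t,k},c^{\mathrm{CP}}_{\omega,z,t,k},c^{\mathrm{REC}}_{\omega,z,t,i,j},c^{\mathrm{TR,RM}}_{z,z'},c^{\mathrm{TR,RB}}_{z,z'}$, values $v_{\omega,t,k}$, proportions $\eta\in[0,1]$, $\rho\geq0$, discount $\gamma$, facility cost functions $f^{\mathrm{REC}}_{z,j},f^{\mathrm{CP}}_{z,k}$. Operational variables $x\geq0$ (for $t\in\mathcal{T},z,\omega\in\Omega_{\sigma_t}$, inventories also at $t=0$): $x^{\mathrm{NM,NB}}_{\omega,z,t,k},x^{\mathrm{RM,INV}}_{\omega,z,t,k},x^{\mathrm{RM,S}}_{\omega,z,t,k},x^{\mathrm{INV}}_{\omega,z,t,k}$ ($k\in\mathcal{K}$); $x^{\mathrm{INV,NB}},x^{\mathrm{CP,INV}}$ ($k\in\mathcal{K}^{\mathrm{CP}}$); $x^{\mathrm{NM,CP}},x^{\mathrm{MC,CP}},x^{\mathrm{INV,MC}}$ ($k\notin\mathcal{K}^{\mathrm{CP}}$); $x^{\mathrm{RB}}_{\omega,z,t,i}$; $x^{\mathrm{RB,RM}}_{\omega,z,t,i,j}$; $x^{\mathrm{TR,RM}}_{\omega,z,z',t,k},x^{\mathrm{TR,RB}}_{\omega,z,z',t,i}$ ($z'\neq z$). Operational constraints (X): for all $t\in\mathcal{T},z,\omega\in\Omega_{\sigma_t}$: $\sum_i\Delta^{\mathrm{NB}}_{i,k}d_{\omega,z,t,i}=x^{\mathrm{NM,NB}}_{\omega,z,t,k}+x^{\mathrm{INV,NB}}_{\omega,z,t,k}$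 ($k\in\mathcal{K}^{\mathrm{CP}}$); $\sum_i\Delta^{\mathrm{NB}}_{i,k}d_{\omega,z,t,i}=x^{\mathrm{NM,NB}}_{\omega,z,t,k}$ ($k\notin\mathcal{K}^{\mathrm{CP}}$); $\sum_{k'\in\mathcal{K}^{\mathrm{CP}}}\Delta^{\mathrm{CP}}_{k',k}x^{\mathrm{CP,INV}}_{\omega,z,t,k'}=x^{\mathrm{NM,CP}}_{\omega,z,t,k}+x^{\mathrm{MC,CP}}_{\omega,z,t,k}$ ($k\notin\mathcal{K}^{\mathrm{CP}}$); $\sum_{k'\notin\mathcal{K}^{\mathrm{CP}}}\Delta^{\mathrm{MC}}_{k',k}x^{\mathrm{MC,CP}}_{\omega,z,t,k'}=x^{\mathrm{INV,MC}}_{\omega,z,t,k}$ ($k\notin\mathcal{K}^{\mathrm{CP}}$); $x^{\mathrm{RM,INV}}_{\omega,z,t,k}+x^{\mathrm{RM,S}}_{\omega,z,t,k}=\sum_{i,j}\Delta^{\mathrm{REC}}_{k,i,j}x^{\mathrm{RB,RM}}_{\omega,z,t,i,j}$; $x^{\mathrm{RB}}_{\omega,z,0,i}=0$, $x^{\mathrm{INV}}_{\omega,z,0,k}=0$ for $\omega\in\Omega_{\sigma_0}$; with $\omega'=a_\omega(t-1)$: $x^{\mathrm{RB}}_{\omega,z,t,i}=x^{\mathrm{RB}}_{\omega',z,t-1,i}+\sum_{z'\neq z}(x^{\mathrm{TR,RB}}_{\omega,z',z,t,i}-x^{\mathrm{TR,RB}}_{\omega,z,z',t,i})+s_{\omega,z,t,i}-\sum_jx^{\mathrm{RB,RM}}_{\omega,z,t,i,j}$;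 $x^{\mathrm{INV}}_{\omega,z,t,k}=x^{\mathrm{INV}}_{\omega',z,t-1,k}+\sum_{z'\neq z}(x^{\mathrm{TR,RM}}_{\omega,z',z,t,k}-x^{\mathrm{TR,RM}}_{\omega,z,z',t,k})+x^{\mathrm{RM,INV}}_{\omega,z,t,k}-x^{\mathrm{INV,MC}}_{\omega,z,t,k}$ for $k\notin\mathcal{K}^{\mathrm{CP}}$, and for $k\in\mathcal{K}^{\mathrm{CP}}$ the same with $-x^{\mathrm{INV,MC}}_{\omega,z,t,k}$ replaced by $+x^{\mathrm{CP,INV}}_{\omega,z,t,k}-x^{\mathrm{INV,NB}}_{\omega,z,t,k}$. Operational cost: $C^{\mathrm{OP}}_{\omega,t}(x)=\sum_{z}\Big(\sum_{k\in\mathcal{K}}c^{\mathrm{NB,NM}}_{\omega,t,k}x^{\mathrm{NM,NB}}_{\omega,z,t,k}+\sum_{k\notin\mathcal{K}^{\mathrm{CP}}}(c^{\mathrm{CP,NM}}_{\omega,t,k}x^{\mathrm{NM,CP}}_{\omega,z,t,k}+c^{\mathrm{MC}}_{\omega,z,t,k}x^{\mathrm{MC,CP}}_{\omega,z,t,k})+\sum_{k}v_{\omega,t,k}(\rho x^{\mathrm{INV}}_{\omega,z,t,k}-\eta x^{\mathrm{RM,S}}_{\omega,z,t,k})+\sum_{k\in\mathcal{K}^{\mathrm{CP}}}c^{\mathrm{CP}}_{\omega,z,t,k}x^{\mathrm{CP,INV}}_{\omega,z,t,k}+\sum_{i,j}c^{\mathrm{REC}}_{\omega,z,t,i,j}x^{\mathrm{RB,RM}}_{\omega,z,t,i,j}+\sum_{z'\neq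 z}(\sum_kc^{\mathrm{TR,RM}}_{z,z'}x^{\mathrm{TR,RM}}_{\omega,z,z',t,k}+\sum_ic^{\mathrm{TR,RB}}_{z,z'}x^{\mathrm{TR,RB}}_{\omega,z,z',t,i})\Big)$. Problem (P): variables $x$ and $y^{\mathrm{REC}}_{z,l,j,n}\geq0$ ($n\in\mathcal{N}^{\mathrm{REC}}_l$), $y^{\mathrm{CP}}_{z,l,k,n}\geq0$ ($k\in\mathcal{K}^{\mathrm{CP}},n\in\mathcal{N}^{\mathrm{CP}}_{l,k}$); constraints (X) together with $\sum_ny^{\mathrm{REC}}_{z,l,j,n}\geq\sum_ix^{\mathrm{RB,RM}}_{\omega,z,t,i,j}$ and $\sum_ny^{\mathrm{CP}}_{z,l,k,n}\geq x^{\mathrm{CP,INV}}_{\omega,z,t,k}$ for all $t\in\mathcal{T}_l,\omega\in\Omega_{\sigma_t}$; $\sum_{n\in\mathcal{N}^{\mathrm{REC}}_l}y^{\mathrm{REC}}_{z,l,j,n}\geq\sum_{n\in\mathcal{N}^{\mathrm{REC}}_{l-1}}y^{\mathrm{REC}}_{z,l-1,j,n}$, $\sum_{n\in\mathcal{N}^{\mathrm{CP}}_{l,k}}y^{\mathrm{CP}}_{z,l,k,n}\geq\sum_{n\in\mathcal{N}^{\mathrm{CP}}_{l-1,k}}y^{\mathrm{CP}}_{z,l-1,k,n}$ ($l\geq2$); $y^{\mathrm{REC}}_{z,l,j,n}\leq u^{\mathrm{REC}}$, $y^{\mathrm{CP}}_{z,l,k,n}\leq u^{\mathrm{CP}}$.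 Objective: minimize $\sum_t(1-\gamma)^{t-1}\big(C^{\mathrm{PL}}_t(y)+\sum_{\omega\in\Omega_{\sigma_t}}p_\omega C^{\mathrm{OP}}_{\omega,t}(x)\big)$ with $C^{\mathrm{PL}}_t(y)=\sum_z\big(\sum_j\sum_{n\in\mathcal{N}^{\mathrm{REC}}_{l_t}}f^{\mathrm{REC}}_{z,j}(y^{\mathrm{REC}}_{z,l_t,j,n})+\sum_{k\in\mathcal{K}^{\mathrm{CP}}}\sum_{n\in\mathcal{N}^{\mathrm{CP}}_{l_t,k}}f^{\mathrm{CP}}_{z,k}(y^{\mathrm{CP}}_{z,l_t,k,n})\big)$. Problem (PMI): variables $x$ and, for each $z,l,j$, an integer $y^{\mathrm{REC}}_{z,l,j}\in\{0,\dots,N^{\mathrm{REC}}_l-1\}$ and a real $y^{\mathrm{REC}}_{z,l,j,+}\in[0,u^{\mathrm{REC}}]$, and for each $z,l,k\in\mathcal{K}^{\mathrm{CP}}$ an integer $y^{\mathrm{CP}}_{z,l,k}\in\{0,\dots,N^{\mathrm{CP}}_{l,k}-1\}$ and a real $y^{\mathrm{CP}}_{z,l,k,+}\in[0,u^{\mathrm{CP}}]$; constraints (X) together with $u^{\mathrm{REC}}y^{\mathrm{REC}}_{z,l,j}+y^{\mathrm{REC}}_{z,l,j,+}\geq\sum_ix^{\mathrm{RB,RM}}_{\omega,z,t,i,j}$ and $u^{\mathrm{CP}}y^{\mathrm{CP}}_{z,l,k}+y^{\mathrm{CP}}_{z,l,k,+}\geq x^{\mathrm{CP,INV}}_{\omega,z,t,k}$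 for all $t\in\mathcal{T}_l,\omega\in\Omega_{\sigma_t}$; $u^{\mathrm{REC}}y^{\mathrm{REC}}_{z,l,j}+y^{\mathrm{REC}}_{z,l,j,+}\geq u^{\mathrm{REC}}y^{\mathrm{REC}}_{z,l-1,j}+y^{\mathrm{REC}}_{z,l-1,j,+}$ and $u^{\mathrm{CP}}y^{\mathrm{CP}}_{z,l,k}+y^{\mathrm{CP}}_{z,l,k,+}\geq u^{\mathrm{CP}}y^{\mathrm{CP}}_{z,l-1,k}+y^{\mathrm{CP}}_{z,l-1,k,+}$ ($l\geq2$). Objective: minimize $\sum_t(1-\gamma)^{t-1}\big(\overline{C}^{\mathrm{PL}}_t(y)+\sum_{\omega\in\Omega_{\sigma_t}}p_\omega C^{\mathrm{OP}}_{\omega,t}(x)\big)$ with $\overline{C}^{\mathrm{PL}}_t(y)=\sum_z\big(\sum_j(f^{\mathrm{REC}}_{z,j}(y^{\mathrm{REC}}_{z,l_t,j,+})+y^{\mathrm{REC}}_{z,l_t,j}f^{\mathrm{REC}}_{z,j}(u^{\mathrm{REC}}))+\sum_{k\in\mathcal{K}^{\mathrm{CP}}}(f^{\mathrm{CP}}_{z,k}(y^{\mathrm{CP}}_{z,l_t,k,+})+y^{\mathrm{CP}}_{z,l_t,k}f^{\mathrm{CP}}_{z,k}(u^{\mathrm{CP}}))\big)$. *)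

From mathcomp Require Import all_boot all_order all_algebra.
From mathcomp Require Import boolp classical_sets reals constructive_ereal ereal.
Local Open Scope classical_set_scope.
Set Implicit Arguments. Unset Strict Implicit. Unset Printing Implicit Defensive.
Import Order.TTheory GRing.Theory Num.Theory.
Local Open Scope ring_scope.

(* I = chemistries, J = recycling processes, K = materials,
   Z = zones, W = (all) scenario-tree nodes, Sg = stages.
   Periods are the naturals 1..nT (with 0 for initial inventories),
   planning periods the naturals 1..nL.                                  *)
Record instance (R : realType) (I J K Z W : finType) (Sg : Type) := Instance {
  KCP   : {set K};
  nT    : nat;
  nL    : nat;
  lper  : nat -> nat;
  sigma : nat -> Sg;
  Omega : Sg -> {set W};
  prob  : W -> R;
  anc   : W -> nat -> W;
  NREC  : nat -> nat;
  NCP   : nat -> K -> nat;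
  DNB   : I -> K -> R;
  DCP   : K -> K -> R;
  DMC   : K -> K -> R;
  DREC  : K -> I -> J -> R;
  dem   : W -> Z -> nat -> I -> R;
  sup   : W -> Z -> nat -> I -> R;
  uREC  : R;
  uCP   : R;
  cNBNM : W -> nat -> K -> R;
  cCPNM : W -> nat -> K -> R;
  cMC   : W -> Z -> nat -> K -> R;
  cCP   : W -> Z -> nat -> K -> R;
  cREC  : W -> Z -> nat -> I -> J -> R;
  cTRRM : Z -> Z -> R;
  cTRRB : Z -> Z -> R;
  val   : W -> nat -> K -> R;
  eta   : R;
  rho   : R;
  gamma : R;
  fREC  : Z -> J -> R -> R;
  fCP   : Z -> K -> R -> R
}.

(* Operational decision variables x.  Transport variables
   xTRRM w z z' t k is x^{TR,RM}_{w,z,z',t,k} (from z to z'); the diagonal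
   z = z' is never used. *)
Record opvars (R : realType) (I J K Z W : finType) := OpVars {
  xNMNB : W -> Z -> nat -> K -> R;
  xRMINV : W -> Z -> nat -> K -> R;
  xRMS  : W -> Z -> nat -> K -> R;
  xINV  : W -> Z -> nat -> K -> R;
  xINVNB : W -> Z -> nat -> K -> R;
  xCPINV : W -> Z -> nat -> K -> R;
  xNMCP : W -> Z -> nat -> K -> R;
  xMCCP : W -> Z -> nat -> K -> R;
  xINVMC : W -> Z -> nat -> K -> R;
  xRB   : W -> Z -> nat -> I -> R;
  xRBRM : W -> Z -> nat -> I -> J -> R;
  xTRRM : W -> Z -> Z -> nat -> K -> R;
  xTRRB : W -> Z -> Z -> nat -> I -> R
}.

Record plvars (R : realType) (J K Z : finType) := PlVars {
  yREC : Z -> nat -> J -> nat -> R;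
  yCP  : Z -> nat -> K -> nat -> R
}.

(* Planning variables of (PMI): integer parts (as naturals) and real parts. *)
Record mivars (R : realType) (J K Z : finType) := MiVars {
  nREC  : Z -> nat -> J -> nat;
  yRECp : Z -> nat -> J -> R;
  nCPi  : Z -> nat -> K -> nat;
  yCPp  : Z -> nat -> K -> R
}.

Section Problems.
Variables (R : realType) (I J K Z W : finType) (Sg : Type).
Variable D : instance R I J K Z W Sg.

Local Notation T := (nT D).
Local Notation L := (nL D).
Local Notation Om t := (Omega D (sigma D t)).

Definition wf_instance : Prop :=
  (* {T_l} is a partition of {1..T} into L (nonempty) blocks, l_t its index *)
  (forall t, (1 <= t <= T)%N -> (1 <= lper D t <= L)%N) /\
  (forall l, (1 <= l <= L)%N -> exists t, (1 <= t <= T)%N /\ lper D t = l) /\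
  (forall t, (t <= T)%N -> Om t != finset.set0) /\
  (forall w, 0 <= prob D w) /\
  (forall t, (t <= T)%N -> \sum_(w in Om t) prob D w = 1) /\
  (forall w t, (t <= T)%N -> anc D w t \in Om t) /\
  (forall w t, (t <= T)%N -> w \in Om t -> anc D w t = w) /\
  (forall l, (1 <= l <= L)%N -> (0 < NREC D l)%N) /\
  (forall l k, (1 <= l <= L)%N -> k \in KCP D -> (0 < NCP D l k)%N) /\
  0 <= eta D <= 1 /\ 0 <= rho D.

Definition data_nonneg : Prop :=
  (forall w z t i, 0 <= dem D w z t i) /\
  (forall w z t i, 0 <= sup D w z t i) /\
  (forall w t k, 0 <= cNBNM D w t k) /\
  (forall w t k, 0 <= cCPNM D w t k) /\
  (forall w z t k, 0 <= cMC D w z t k) /\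
  (forall w z t k, 0 <= cCP D w z t k) /\
  (forall w z t i j, 0 <= cREC D w z t i j) /\
  (forall z z', 0 <= cTRRM D z z') /\
  (forall z z', 0 <= cTRRB D z z') /\
  (forall w t k, 0 <= val D w t k) /\
  (forall w, 0 <= prob D w) /\
  (forall i k, 0 <= DNB D i k) /\
  (forall k' k, 0 <= DCP D k' k) /\
  (forall k' k, 0 <= DMC D k' k) /\
  (forall k i j, 0 <= DREC D k i j).

Definition op_feasible (x : opvars R I J K Z W) : Prop :=
  (forall t w z, (t <= T)%N -> w \in Om t ->
     (forall k, 0 <= xNMNB x w z t k /\ 0 <= xRMINV x w z t k /\
                0 <= xRMS x w z t k /\ 0 <= xINV x w z t k /\
                0 <= xINVNB x w z t k /\ 0 <= xCPINV x w z t k /\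
                0 <= xNMCP x w z t k /\ 0 <= xMCCP x w z t k /\
                0 <= xINVMC x w z t k) /\
     (forall i, 0 <= xRB x w z t i) /\
     (forall i j, 0 <= xRBRM x w z t i j) /\
     (forall z' k, z' != z -> 0 <= xTRRM x w z z' t k) /\
     (forall z' i, z' != z -> 0 <= xTRRB x w z z' t i)) /\
  (forall w z, w \in Om 0 ->
     (forall i, xRB x w z 0 i = 0) /\ (forall k, xINV x w z 0 k = 0)) /\
  (forall t w z, (1 <= t <= T)%N -> w \in Om t ->
     let w' := anc D w t.-1 in
     (forall k, k \in KCP D ->
        \sum_i DNB D i k * dem D w z t i = xNMNB x w z t k + xINVNB x w z t k) /\
     (forall k, k \notin KCP D ->
        \sum_i DNB D i k * dem D w z t i = xNMNB x w z t k) /\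
     (forall k, k \notin KCP D ->
        \sum_(k' in KCP D) DCP D k' k * xCPINV x w z t k'
          = xNMCP x w z t k + xMCCP x w z t k) /\
     (forall k, k \notin KCP D ->
        \sum_(k' | k' \notin KCP D) DMC D k' k * xMCCP x w z t k'
          = xINVMC x w z t k) /\
     (forall k, xRMINV x w z t k + xRMS x w z t k
          = \sum_i \sum_j DREC D k i j * xRBRM x w z t i j) /\
     (forall i, xRB x w z t i =
          xRB x w' z t.-1 i
          + \sum_(z' | z' != z) (xTRRB x w z' z t i - xTRRB x w z z' t i)
          + sup D w z t i - \sum_j xRBRM x w z t i j) /\
     (forall k, k \notin KCP D -> xINV x w z t k =
          xINV x w' z t.-1 k
          + \sum_(z' | z' != z) (xTRRM x w z' z t k - xTRRM x w z z' t k)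
          + xRMINV x w z t k - xINVMC x w z t k) /\
     (forall k, k \in KCP D -> xINV x w z t k =
          xINV x w' z t.-1 k
          + \sum_(z' | z' != z) (xTRRM x w z' z t k - xTRRM x w z z' t k)
          + xRMINV x w z t k + xCPINV x w z t k - xINVNB x w z t k)).

Definition COP (x : opvars R I J K Z W) (w : W) (t : nat) : R :=
  \sum_z (
    \sum_k cNBNM D w t k * xNMNB x w z t k
  + \sum_(k | k \notin KCP D)
       (cCPNM D w t k * xNMCP x w z t k + cMC D w z t k * xMCCP x w z t k)
  + \sum_k val D w t k * (rho D * xINV x w z t k - eta D * xRMS x w z t k)
  + \sum_(k in KCP D) cCP D w z t k * xCPINV x w z t k
  + \sum_i \sum_j cREC D w z t i j * xRBRM x w z t i j
  + \sum_(z' | z' != z)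
       (\sum_k cTRRM D z z' * xTRRM x w z z' t k
        + \sum_i cTRRB D z z' * xTRRB x w z z' t i)).

Definition P_feasible (x : opvars R I J K Z W) (y : plvars R J K Z) : Prop :=
  op_feasible x /\
  (forall z l j n, (1 <= l <= L)%N -> (1 <= n <= NREC D l)%N ->
     0 <= yREC y z l j n <= uREC D) /\
  (forall z l k n, (1 <= l <= L)%N -> k \in KCP D -> (1 <= n <= NCP D l k)%N ->
     0 <= yCP y z l k n <= uCP D) /\
  (forall t w z j, (1 <= t <= T)%N -> w \in Om t ->
     \sum_i xRBRM x w z t i j
       <= \sum_(1 <= n < (NREC D (lper D t)).+1) yREC y z (lper D t) j n) /\
  (forall t w z k, (1 <= t <= T)%N -> w \in Om t -> k \in KCP D ->
     xCPINV x w z t k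
       <= \sum_(1 <= n < (NCP D (lper D t) k).+1) yCP y z (lper D t) k n) /\
  (forall z l j, (2 <= l <= L)%N ->
     \sum_(1 <= n < (NREC D l.-1).+1) yREC y z l.-1 j n
       <= \sum_(1 <= n < (NREC D l).+1) yREC y z l j n) /\
  (forall z l k, (2 <= l <= L)%N -> k \in KCP D ->
     \sum_(1 <= n < (NCP D l.-1 k).+1) yCP y z l.-1 k n
       <= \sum_(1 <= n < (NCP D l k).+1) yCP y z l k n).

Definition CPL (y : plvars R J K Z) (t : nat) : R :=
  \sum_z (\sum_j \sum_(1 <= n < (NREC D (lper D t)).+1)
              fREC D z j (yREC y z (lper D t) j n)
        + \sum_(k in KCP D) \sum_(1 <= n < (NCP D (lper D t) k).+1)
              fCP D z k (yCP y z (lper D t) k n)).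

Definition P_obj (x : opvars R I J K Z W) (y : plvars R J K Z) : R :=
  \sum_(1 <= t < T.+1) (1 - gamma D) ^+ t.-1 *
     (CPL y t + \sum_(w in Om t) prob D w * COP x w t).

Definition PMI_feasible (x : opvars R I J K Z W) (y : mivars R J K Z) : Prop :=
  op_feasible x /\
  (forall z l j, (1 <= l <= L)%N ->
     (nREC y z l j < NREC D l)%N /\ 0 <= yRECp y z l j <= uREC D) /\
  (forall z l k, (1 <= l <= L)%N -> k \in KCP D ->
     (nCPi y z l k < NCP D l k)%N /\ 0 <= yCPp y z l k <= uCP D) /\
  (forall t w z j, (1 <= t <= T)%N -> w \in Om t ->
     \sum_i xRBRM x w z t i j
       <= uREC D * (nREC y z (lper D t) j)%:R + yRECp y z (lper D t) j) /\
  (forall t w z k, (1 <= t <= T)%N -> w \in Om t -> k \in KCP D ->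
     xCPINV x w z t k
       <= uCP D * (nCPi y z (lper D t) k)%:R + yCPp y z (lper D t) k) /\
  (forall z l j, (2 <= l <= L)%N ->
     uREC D * (nREC y z l.-1 j)%:R + yRECp y z l.-1 j
       <= uREC D * (nREC y z l j)%:R + yRECp y z l j) /\
  (forall z l k, (2 <= l <= L)%N -> k \in KCP D ->
     uCP D * (nCPi y z l.-1 k)%:R + yCPp y z l.-1 k
       <= uCP D * (nCPi y z l k)%:R + yCPp y z l k).

Definition CPLbar (y : mivars R J K Z) (t : nat) : R :=
  \sum_z (\sum_j (fREC D z j (yRECp y z (lper D t) j)
                  + (nREC y z (lper D t) j)%:R * fREC D z j (uREC D))
        + \sum_(k in KCP D) (fCP D z k (yCPp y z (lper D t) k)
                  + (nCPi y z (lper D t) k)%:R * fCP D z k (uCP D))).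

Definition PMI_obj (x : opvars R I J K Z W) (y : mivars R J K Z) : R :=
  \sum_(1 <= t < T.+1) (1 - gamma D) ^+ t.-1 *
     (CPLbar y t + \sum_(w in Om t) prob D w * COP x w t).

(* Optimal values: infima in the extended reals (+oo if infeasible). *)
Definition P_value : \bar R :=
  ereal_inf [set v | exists x y, P_feasible x y /\ v = (P_obj x y)%:E].

Definition PMI_value : \bar R :=
  ereal_inf [set v | exists x y, PMI_feasible x y /\ v = (PMI_obj x y)%:E].

End Problems.

Definition concave_on_nonneg (R : realType) (f : R -> R) : Prop :=
  forall x y a : R, 0 <= x -> 0 <= y -> 0 <= a <= 1 ->
    a * f x + (1 - a) * f y <= f (a * x + (1 - a) * y).

Definition nondecr_on_nonneg (R : realType) (f : R -> R) : Prop :=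
  forall x y : R, 0 <= x -> x <= y -> f x <= f y.

(* A (PMI) plan with m full modules of capacity u and one partial module r is
   the (P) plan whose modules are m copies of u, one r and zeros; since f 0 = 0
   both have the same cost.  Conversely, the modules y_1, ..., y_N in [0, u] of
   a (P) plan are consolidated greedily: a running remainder absorbs y_n, and
   whenever it exceeds u a full module is split off.  This preserves the total
   capacity and, by concavity, pushing two loads a, b apart to x <= a, b <= y
   with x + y = a + b never increases f a + f b; so the consolidated plan costs
   no more and uses fewer than N modules. *)

From mathcomp Require Import all_boot all_order all_algebra.
From mathcomp Require Import boolp classical_sets reals constructive_ereal.
From mathcomp Require Import ereal.
From mathcomp Require Import ring lra zify.
Local Open Scope classical_set_scope.
Import Order.TTheory GRing.Theory Num.Theory.
Local Open Scope ring_scope.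
Set Implicit Arguments. Unset Strict Implicit.

Section ConcaveCost.
Variables (R : realType) (f : R -> R).
Hypothesis f_concave : concave_on_nonneg f.

Lemma concave_spread x y a b : 0 <= x -> x <= a <= y -> x <= b <= y ->
  a + b = x + y -> f x + f y <= f a + f b.
Proof.
move=> x0 a_bnd b_bnd ab; have /andP[xa ay] := a_bnd.
have eb : b = x + y - a by lra.
rewrite eb in b_bnd *.
have [yx|] := eqVneq y x.
  have -> : a = x by lra.
  by rewrite yx addrK.
rewrite -subr_eq0 => yx0.
have ypos : 0 < y - x by rewrite lt0r yx0; lra.
pose lam c := (y - c) / (y - x).
have lam01 c : x <= c <= y -> 0 <= lam c <= 1.
  by move=> /andP[xc cy]; rewrite divr_ge0 ?ler_pdivrMr //=; lra.
have y0 : 0 <= y by lra.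
have Ha := f_concave x0 y0 (lam01 a a_bnd).
have Hb := f_concave x0 y0 (lam01 _ b_bnd).
have comb_a : lam a * x + (1 - lam a) * y = a by rewrite /lam; field.
have comb_b : lam (x + y - a) * x + (1 - lam (x + y - a)) * y = x + y - a.
  by rewrite /lam; field.
have lam_b : lam (x + y - a) = 1 - lam a by rewrite /lam; field.
rewrite comb_a in Ha; rewrite comb_b lam_b in Hb.
lra.
Qed.

Hypothesis f0 : f 0 = 0.

Lemma concave_subadditive a b : 0 <= a -> 0 <= b -> f (a + b) <= f a + f b.
Proof.
move=> a0 b0; rewrite -[f (a + b)]add0r -f0.
by apply: concave_spread; rewrite ?add0r //; apply/andP; split=> //; lra.
Qed.

End ConcaveCost.

Section Consolidation.
Variables (R : realType) (f : R -> R) (u : R).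
Hypotheses (f_concave : concave_on_nonneg f) (f0 : f 0 = 0) (u_ge0 : 0 <= u).

Definition consolidate_step (p : nat * R) (y : R) : nat * R :=
  if p.2 + y <= u then (p.1, p.2 + y) else (p.1.+1, p.2 + y - u).

(* Loads are indexed from 1, like the modules of (P): [consolidate y n]
   processes y 1, ..., y n. *)
Fixpoint consolidate (y : nat -> R) (n : nat) : nat * R :=
  if n is n'.+1 then consolidate_step (consolidate y n') (y n) else (0%N, 0).

Lemma consolidate_stepP m r y : 0 <= r <= u -> 0 <= y <= u ->
  let: (m', r') := consolidate_step (m, r) y in
  [/\ m' = m \/ m' = m.+1 /\ 0 < r, 0 <= r' <= u,
      u * m'%:R + r' = u * m%:R + r + y &
      f r' + m'%:R * f u <= f r + m%:R * f u + f y].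
Proof.
move=> /andP[r0 ru] /andP[y0 yu]; rewrite /consolidate_step /=.
have [ryu | ury] := leP (r + y) u.
  split; [by left | by apply/andP; lra | by rewrite addrA |].
  by have := concave_subadditive f_concave f0 r0 y0; lra.
split; [by right; split=> //; lra | by apply/andP; lra | |].
  by rewrite -natr1 mulrDr mulr1; lra.
have spread : f (r + y - u) + f u <= f r + f y.
  apply: (concave_spread f_concave); last by ring.
  - by lra.
  - by apply/andP; lra.
  - by apply/andP; lra.
by rewrite -natr1 mulrDl mul1r; lra.
Qed.

Lemma consolidate_inv y n : (forall i, (1 <= i <= n)%N -> 0 <= y i <= u) ->
  let: (m, r) := consolidate y n in
  [/\ (m <= n.-1)%N, 0 <= r <= u, u * m%:R + r = \sum_(1 <= i < n.+1) y i &
      f r + m%:R * f u <= \sum_(1 <= i < n.+1) f (y i)].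
Proof.
elim: n => [|n IH] y_bnd.
  by rewrite /= !big_geq // mulr0 f0 mul0r !addr0 lexx u_ge0.
have /IH : forall i, (1 <= i <= n)%N -> 0 <= y i <= u.
  by move=> i /andP[i1 i2]; apply: y_bnd; rewrite i1 ltnW.
rewrite /= !(big_nat_recr n.+1) //=.
case E: (consolidate y n) => [m r] [m_bnd r_bnd sum_mr cost_mr].
have := consolidate_stepP m r_bnd (y_bnd n.+1 (leqnn n.+1)).
case: consolidate_step => m' r' [m'E r'_bnd sum_m'r' cost_m'r'].
split=> //; [| by rewrite sum_m'r' sum_mr | by lra].
case: m'E => [-> | [-> r_gt0]]; first by rewrite (leq_trans m_bnd) ?leq_pred.
(* An overflow needs a positive remainder, impossible at the first step. *)
have n_gt0 : (0 < n)%N.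
  rewrite lt0n; apply: contraTneq r_gt0 => n0.
  by move: E; rewrite n0 => -[_ <-]; rewrite ltxx.
lia.
Qed.

Lemma consolidateP y N : (0 < N)%N ->
    (forall n, (1 <= n <= N)%N -> 0 <= y n <= u) ->
  let: (m, r) := consolidate y N in
  [/\ (m < N)%N, 0 <= r <= u, u * m%:R + r = \sum_(1 <= n < N.+1) y n &
      f r + m%:R * f u <= \sum_(1 <= n < N.+1) f (y n)].
Proof.
move=> N_gt0 /consolidate_inv; case: consolidate => m r [m_le] *.
by split=> //; rewrite -(prednK N_gt0) ltnS.
Qed.

End Consolidation.

Section ExpandModules.
Variable R : pzRingType.

Definition expand_modules (u r : R) (m n : nat) : R :=
  if (n <= m)%N then u else if n == m.+1 then r else 0.

Lemma sum_expand_modules (g : R -> R) u r m N : g 0 = 0 -> (m < N)%N ->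
  \sum_(1 <= n < N.+1) g (expand_modules u r m n) = g r + m%:R * g u.
Proof.
move=> g0 mN.
have tail0 : \sum_(m.+2 <= n < N.+1) g (expand_modules u r m n) = 0.
  rewrite big_nat_cond big1 // => n /andP[/andP[mn _] _].
  by rewrite /expand_modules leqNgt ltnW // gtn_eqF.
rewrite (@big_cat_nat _ _ _ m.+1) //= 1?ltnW //.
rewrite (@big_ltn _ _ _ m.+1 N.+1) // tail0 /expand_modules ltnn eqxx.
rewrite addr0 addrC.
rewrite (eq_big_nat _ _ (F2 := fun => g u)) => [|n /andP[_ nm]].
  by rewrite sumr_const_nat subn1 mulr_natl.
by rewrite -ltnS nm.
Qed.

Lemma sum_expand_modules_id u r m N : (m < N)%N ->
  \sum_(1 <= n < N.+1) expand_modules u r m n = u * m%:R + r.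
Proof.
by move=> mN; rewrite (@sum_expand_modules id) // mulr_natl mulr_natr addrC.
Qed.

End ExpandModules.

Lemma ereal_inf_le_dominated (R : realType) (X1 Y1 X2 Y2 : Type)
    (F1 : X1 -> Y1 -> Prop) (F2 : X2 -> Y2 -> Prop)
    (o1 : X1 -> Y1 -> R) (o2 : X2 -> Y2 -> R) :
  (forall x1 y1, F1 x1 y1 -> exists x2 y2, F2 x2 y2 /\ o2 x2 y2 <= o1 x1 y1) ->
  (ereal_inf [set v | exists x y, F2 x y /\ v = (o2 x y)%:E]
    <= ereal_inf [set v | exists x y, F1 x y /\ v = (o1 x y)%:E])%E.
Proof.
move=> dom; apply: le_ereal_inf_tmp => _ [x1 [y1 [F1xy ->]]].
have [x2 [y2 [F2xy le_o]]] := dom _ _ F1xy.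
by apply: ge_ereal_inf; exists (o2 x2 y2)%:E; [exists x2, y2 | rewrite lee_fin].
Qed.

Lemma planning_pred_range L l :
  (2 <= l <= L)%N -> (1 <= l.-1 <= L)%N /\ (1 <= l <= L)%N.
Proof. by move=> l_range; split; lia. Qed.

Section Relaxation.
Variables (R : realType) (I J K Z W : finType) (Sg : Type).
Variable D : instance R I J K Z W Sg.

Local Notation L := (nL D).

Hypothesis lper_range :
  forall t, (1 <= t <= nT D)%N -> (1 <= lper D t <= L)%N.
Hypothesis NREC_gt0 : forall l, (1 <= l <= L)%N -> (0 < NREC D l)%N.
Hypothesis NCP_gt0 :
  forall l k, (1 <= l <= L)%N -> k \in KCP D -> (0 < NCP D l k)%N.
Hypotheses (uREC_ge0 : 0 <= uREC D) (uCP_ge0 : 0 <= uCP D).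
Hypothesis fREC_concave : forall z j, concave_on_nonneg (fREC D z j).
Hypothesis fCP_concave : forall z k, concave_on_nonneg (fCP D z k).
Hypothesis fREC0 : forall z j, fREC D z j 0 = 0.
Hypothesis fCP0 : forall z k, fCP D z k 0 = 0.
Hypothesis gamma_le1 : gamma D <= 1.

Definition expand_plan (y : mivars R J K Z) : plvars R J K Z :=
  PlVars (fun z l j => expand_modules (uREC D) (yRECp y z l j) (nREC y z l j))
         (fun z l k => expand_modules (uCP D) (yCPp y z l k) (nCPi y z l k)).

Lemma expand_plan_feasible x y :
  PMI_feasible D x y -> P_feasible D x (expand_plan y).
Proof.
move=> [x_op [REC_bnd [CP_bnd [REC_cap [CP_cap [REC_mon CP_mon]]]]]].
have expand_bnd (u r : R) m n : 0 <= u -> 0 <= r <= u ->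
    0 <= expand_modules u r m n <= u.
  move=> u0 r_bnd; rewrite /expand_modules.
  by do 2?case: ifP => _; rewrite ?lexx ?u0.
split=> //; split; [|split; [|split; [|split; [|split]]]].
- move=> z l j n l_range _ /=; have [_ r_bnd] := REC_bnd z l j l_range.
  exact: expand_bnd.
- move=> z l k n l_range kCP _ /=; have [_ r_bnd] := CP_bnd z l k l_range kCP.
  exact: expand_bnd.
- move=> t w z j t_range wt /=.
  have [m_lt _] := REC_bnd z (lper D t) j (lper_range t_range).
  by rewrite sum_expand_modules_id //; apply: REC_cap.
- move=> t w z k t_range wt kCP /=.
  have [m_lt _] := CP_bnd z (lper D t) k (lper_range t_range) kCP.
  by rewrite sum_expand_modules_id //; apply: CP_cap.
- move=> z l j l_range /=.
  have [l1_range l0_range] := planning_pred_range l_range.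
  have [m1_lt _] := REC_bnd z l.-1 j l1_range.
  have [m_lt _] := REC_bnd z l j l0_range.
  by rewrite !sum_expand_modules_id //; apply: REC_mon.
- move=> z l k l_range kCP /=.
  have [l1_range l0_range] := planning_pred_range l_range.
  have [m1_lt _] := CP_bnd z l.-1 k l1_range kCP.
  have [m_lt _] := CP_bnd z l k l0_range kCP.
  by rewrite !sum_expand_modules_id //; apply: CP_mon.
Qed.

Lemma P_obj_expand_plan x y :
  PMI_feasible D x y -> P_obj D x (expand_plan y) = PMI_obj D x y.
Proof.
move=> [_ [REC_bnd [CP_bnd _]]].
apply: eq_big_nat => t /lper_range l_range; congr (_ * (_ + _)).
apply: eq_bigr => z _; congr (_ + _).
  apply: eq_bigr => j _; have [m_lt _] := REC_bnd z (lper D t) j l_range.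
  exact: sum_expand_modules.
apply: eq_bigr => k kCP; have [m_lt _] := CP_bnd z (lper D t) k l_range kCP.
exact: sum_expand_modules.
Qed.

Definition consolidate_plan (y : plvars R J K Z) : mivars R J K Z :=
  MiVars (fun z l j => (consolidate (uREC D) (yREC y z l j) (NREC D l)).1)
         (fun z l j => (consolidate (uREC D) (yREC y z l j) (NREC D l)).2)
         (fun z l k => (consolidate (uCP D) (yCP y z l k) (NCP D l k)).1)
         (fun z l k => (consolidate (uCP D) (yCP y z l k) (NCP D l k)).2).

Lemma consolidate_plan_REC x y z l j :
    P_feasible D x y -> (1 <= l <= L)%N ->
  let yc := consolidate_plan y in
  [/\ (nREC yc z l j < NREC D l)%N, 0 <= yRECp yc z l j <= uREC D,
      uREC D * (nREC yc z l j)%:R + yRECp yc z l j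
        = \sum_(1 <= n < (NREC D l).+1) yREC y z l j n &
      fREC D z j (yRECp yc z l j) + (nREC yc z l j)%:R * fREC D z j (uREC D)
        <= \sum_(1 <= n < (NREC D l).+1) fREC D z j (yREC y z l j n)].
Proof.
move=> [_ [REC_bnd _]] l_range /=.
have := consolidateP (fREC_concave z j) (fREC0 z j) uREC_ge0 (NREC_gt0 l_range)
  (fun n => REC_bnd z l j n l_range).
by case: consolidate.
Qed.

Lemma consolidate_plan_CP x y z l k :
    P_feasible D x y -> (1 <= l <= L)%N -> k \in KCP D ->
  let yc := consolidate_plan y in
  [/\ (nCPi yc z l k < NCP D l k)%N, 0 <= yCPp yc z l k <= uCP D,
      uCP D * (nCPi yc z l k)%:R + yCPp yc z l k
        = \sum_(1 <= n < (NCP D l k).+1) yCP y z l k n &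
      fCP D z k (yCPp yc z l k) + (nCPi yc z l k)%:R * fCP D z k (uCP D)
        <= \sum_(1 <= n < (NCP D l k).+1) fCP D z k (yCP y z l k n)].
Proof.
move=> [_ [_ [CP_bnd _]]] l_range kCP /=.
have := consolidateP (fCP_concave z k) (fCP0 z k) uCP_ge0 (NCP_gt0 l_range kCP)
  (fun n => CP_bnd z l k n l_range kCP).
by case: consolidate.
Qed.

Lemma consolidate_plan_feasible x y :
  P_feasible D x y -> PMI_feasible D x (consolidate_plan y).
Proof.
move=> xy_feas; have REC z l j := @consolidate_plan_REC x y z l j xy_feas.
have CP z l k := @consolidate_plan_CP x y z l k xy_feas.
move: xy_feas => [x_op [_ [_ [REC_cap [CP_cap [REC_mon CP_mon]]]]]].
split=> //; split; [|split; [|split; [|split; [|split]]]].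
- by move=> z l j /(REC z _ j) [].
- by move=> z l k l_range /(CP z _ k l_range) [].
- move=> t w z j t_range wt.
  have [_ _ -> _] := REC z _ j (lper_range t_range).
  exact: REC_cap.
- move=> t w z k t_range wt kCP.
  have [_ _ -> _] := CP z _ k (lper_range t_range) kCP.
  exact: CP_cap.
- move=> z l j l_range.
  have [l1_range l0_range] := planning_pred_range l_range.
  have [_ _ -> _] := REC z _ j l1_range; have [_ _ -> _] := REC z _ j l0_range.
  exact: REC_mon.
- move=> z l k l_range kCP.
  have [l1_range l0_range] := planning_pred_range l_range.
  have [_ _ -> _] := CP z _ k l1_range kCP.
  have [_ _ -> _] := CP z _ k l0_range kCP.
  exact: CP_mon.
Qed.

Lemma PMI_obj_consolidate_plan x y :
  P_feasible D x y -> PMI_obj D x (consolidate_plan y) <= P_obj D x y.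
Proof.
move=> xy_feas; apply: ler_sum_nat => t /lper_range l_range.
apply: ler_wpM2l; first by rewrite exprn_ge0 // subr_ge0.
rewrite lerD2r; apply: ler_sum => z _; apply: lerD.
  apply: ler_sum => j _.
  by have [_ _ _] := consolidate_plan_REC z j xy_feas l_range.
apply: ler_sum => k kCP.
by have [_ _ _] := consolidate_plan_CP z xy_feas l_range kCP.
Qed.

End Relaxation.

Theorem theorem2 (R : realType) (I J K Z W : finType) (Sg : Type)
    (D : instance R I J K Z W Sg) :
  wf_instance D ->
  data_nonneg D ->
  0 < uREC D -> 0 < uCP D ->
  0 <= gamma D < 1 ->
  (forall z j, concave_on_nonneg (fREC D z j) /\ nondecr_on_nonneg (fREC D z j)
               /\ fREC D z j 0 = 0) ->
  (forall z k, concave_on_nonneg (fCP D z k) /\ nondecr_on_nonneg (fCP D z k)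
               /\ fCP D z k 0 = 0) ->
  P_value D = PMI_value D.
Proof.
move=> [lper_range [_ [_ [_ [_ [_ [_ [NREC_gt0 [NCP_gt0 _]]]]]]]]] _
  uREC_gt0 uCP_gt0 /andP[_ /ltW gamma_le1] fREC_props fCP_props.
have fREC_concave z j := (fREC_props z j).1.
have fREC0 z j := (fREC_props z j).2.2.
have fCP_concave z k := (fCP_props z k).1.
have fCP0 z k := (fCP_props z k).2.2.
have uREC_ge0 := ltW uREC_gt0; have uCP_ge0 := ltW uCP_gt0.
apply: le_anti; apply/andP; split; apply: ereal_inf_le_dominated => x y xy_feas.
- exists x, (expand_plan D y); split; first by apply: expand_plan_feasible.
  by rewrite P_obj_expand_plan.
- exists x, (consolidate_plan D y).
  split; first exact: consolidate_plan_feasible.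
  exact: PMI_obj_consolidate_plan.
Qed.
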